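(* Let $V\neq\emptyset$, let $F\colon V\leadsto V$ be an undirected multifunction and let $m,k\in\mathbb{N}$. Then: (i) $F^{\infty\cup}_{\mid m}(w)=\{u\in V\mid \mathrm{Walk}_{u\to w}(F,V\mid m)\neq\emptyset\}$ for every $w\in V$, and $F^{\infty\cup}_{\mid m}$ is undirected, everywhereloop and transitive; (ii) $F^{\infty\cup}_{\mid -m}=F^{\infty-}_{\mid m}=F^{\infty\cup}_{\mid m}$; (iii) $(F^{m\cup})^{\infty\cup}_{\mid k}=F^{\infty\cup}_{\mid k\cdot m}$; (iv) if $k\mid m$ then $F^{\infty\cup}_{\mid m}\subset F^{\infty\cup}_{\mid k}$ and $F^{m\cup}\subset F^{\infty\cup}_{\mid k}$; (v) $F^{m\cup}\subset F^{\infty\cup}_{\mid m}\subset F^{\infty\cup}_{\mid 1}$.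
   Context: Here $\mathbb{N}=\{0,1,2,\dots\}$, $-\mathbb{N}=\{-n\mid n\in\mathbb{N}\}$. A multifunction $F\colon V\leadsto V$ is a map $V\to P(V)$, with inverse $F^{-1}(v)=\{x\mid v\in F(x)\}$; it is undirected if $F=F^{-1}$, everywhereloop if $v\in F(v)$ for all $v$, transitive if $u\in F(v)$ and $v\in F(w)$ imply $u\in F(w)$. Inclusion and union of multifunctions are pointwise. For $A\subset V$: $F_{\cup}(A)=\bigcup_{a\in A}F(a)$, $F_{-}(A)=\{x\mid F(x)\cap A\neq\emptyset\}$. For $n\in\mathbb{Z}$: $F^{0\cup}(v)=\{v\}$, $F^{n\cup}(v)=F_{\cup}(F^{(n-1)\cup}(v))$ for $n>0$, $F^{n\cup}=(F^{-1})^{(-n)\cup}$ for $n<0$; similarly $F^{0-}(v)=\{v\}$, $F^{n-}(v)=F_{-}(F^{(n-1)-}(v))$ for $n>0$, $F^{n-}=(F^{-1})^{(-n)-}$ for $n<0$. For $m\in\mathbb{Z}$: $F^{+\infty\cup}_{\mid m}=\bigcup_{n\in\mathbb{N}}F^{(mn)\cup}$, $F^{-\infty\cup}_{\mid m}=\bigcup_{n\in-\mathbb{N}}F^{(mn)\cup}$, $F^{\infty\cup}_{\mid m}=F^{+\infty\cup}_{\mid m}\cup F^{-\infty\cup}_{\mid m}$, and analogously $F^{\infty-}_{\mid m}=\bigcup_{n\in\mathbb{N}}F^{(mn)-}\cup\bigcup_{n\in-\mathbb{N}}F^{(mn)-}$. $\mathrm{Walk}_{u\to w}(F,V,n)$ is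 the set of words $\alpha_1\cdots\alpha_{n+1}$ over $V$ with $\alpha_1=u$, $\alpha_{n+1}=w$, $\alpha_i\in F(\alpha_{i+1})$ for $1\le i\le n$; and $\mathrm{Walk}_{u\to w}(F,V\mid m)=\bigcup_{n\in\mathbb{N}}\mathrm{Walk}_{u\to w}(F,V,m\cdot n)$. *)

(* Multifunctions F : V ~> V are encoded as F : V -> V -> Prop,
   where  F v x  means  x \in F(v). *)
From Stdlib Require Import ZArith List Arith.
Import ListNotations.

Definition mfun (V : Type) := V -> V -> Prop.

Definition mf_inv {V} (F : mfun V) : mfun V := fun v x => F x v.

Definition mf_eq {V} (F G : mfun V) : Prop := forall v x, F v x <-> G v x.
Definition mf_sub {V} (F G : mfun V) : Prop := forall v x, F v x -> G v x.

Definition undirected {V} (F : mfun V) : Prop := mf_eq F (mf_inv F).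
Definition everywhereloop {V} (F : mfun V) : Prop := forall v, F v v.
Definition mf_transitive {V} (F : mfun V) : Prop :=
  forall u v w, F v u -> F w v -> F w u.

Definition img_cup {V} (F : mfun V) (A : V -> Prop) : V -> Prop :=
  fun x => exists a, A a /\ F a x.
Definition img_minus {V} (F : mfun V) (A : V -> Prop) : V -> Prop :=
  fun x => exists y, F x y /\ A y.

Fixpoint pow_cup_nat {V} (F : mfun V) (n : nat) : mfun V :=
  match n with
  | O => fun v x => x = v
  | S n' => fun v => img_cup F (pow_cup_nat F n' v)
  end.
Fixpoint pow_minus_nat {V} (F : mfun V) (n : nat) : mfun V :=
  match n with
  | O => fun v x => x = v
  | S n' => fun v => img_minus F (pow_minus_nat F n' v)
  end.

Definition pow_cup {V} (F : mfun V) (n : Z) : mfun V :=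
  if (0 <=? n)%Z then pow_cup_nat F (Z.to_nat n)
  else pow_cup_nat (mf_inv F) (Z.to_nat (- n)).
Definition pow_minus {V} (F : mfun V) (n : Z) : mfun V :=
  if (0 <=? n)%Z then pow_minus_nat F (Z.to_nat n)
  else pow_minus_nat (mf_inv F) (Z.to_nat (- n)).

Definition inf_cup {V} (F : mfun V) (m : Z) : mfun V :=
  fun v x => exists n : nat,
    pow_cup F (m * Z.of_nat n) v x \/ pow_cup F (m * (- Z.of_nat n)) v x.
Definition inf_minus {V} (F : mfun V) (m : Z) : mfun V :=
  fun v x => exists n : nat,
    pow_minus F (m * Z.of_nat n) v x \/ pow_minus F (m * (- Z.of_nat n)) v x.

(* Walk_{u -> w}(F, V, n): words a_1 ... a_{n+1} (lists of length n+1,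
   0-indexed here) with a_1 = u, a_{n+1} = w, a_i \in F(a_{i+1}). *)
Definition is_walk {V} (F : mfun V) (u w : V) (n : nat) (l : list V) : Prop :=
  length l = S n /\ nth 0 l u = u /\ nth n l u = w /\
  forall i, i < n -> F (nth (S i) l u) (nth i l u).

Definition is_walk_mod {V} (F : mfun V) (u w : V) (m : nat) (l : list V) : Prop :=
  exists n : nat, is_walk F u w (m * n) l.

From Stdlib Require Import ZArith List Arith Lia.
Import ListNotations.

(* For an undirected F the negative powers coincide with the positive ones, so
   F^{oo cup}_{|z} collapses to F^{+oo cup}_{||z|} = U_n F^{(|z| n) cup}.  Everything
   else comes from F^{(a+b) cup}(w) = F^{b cup}(F^{a cup}(w)): it gives transitivity
   and (F^{m cup})^{n cup} = F^{(mn) cup}, unfolding it step by step gives the walks,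
   and it makes each F^{n cup} undirected.  Finally F^{n -} = (F^{-1})^{n cup} for
   every F, which handles the minus-iterates. *)

Definition inf_cup_pos {V} (F : mfun V) (m : nat) : mfun V :=
  fun v x => exists n : nat, pow_cup_nat F (m * n) v x.

Section Multifunctions.

Context {V : Type}.
Implicit Types F G : mfun V.

Lemma pow_cup_nat_add F a b w u :
  pow_cup_nat F (a + b) w u <-> exists v, pow_cup_nat F a w v /\ pow_cup_nat F b v u.
Proof.
  revert u; induction b as [|b IHb]; intros u.
  - rewrite Nat.add_0_r; simpl; split.
    + intros H; exists u; auto.
    + intros [v [H ->]]; exact H.
  - rewrite Nat.add_succ_r; simpl; unfold img_cup; split.
    + intros [c [Hc Hcu]]. apply IHb in Hc as [v [Hv Hvc]]. eauto.
    + intros [v [Hv [c [Hc Hcu]]]]. exists c. split; [apply IHb; eauto | exact Hcu].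
Qed.

Lemma pow_cup_nat_1 F v x : pow_cup_nat F 1 v x <-> F v x.
Proof.
  simpl; unfold img_cup; split.
  - intros [a [-> H]]; exact H.
  - intros H; eauto.
Qed.

Lemma pow_cup_nat_ext F G n v x :
  mf_eq F G -> pow_cup_nat F n v x <-> pow_cup_nat G n v x.
Proof.
  intros HFG; revert v x; induction n as [|n IHn]; intros v x; simpl; [tauto|].
  unfold img_cup; split; intros [a [Ha Hax]]; exists a; split;
    try apply IHn; try apply HFG; assumption.
Qed.

Lemma pow_cup_nat_mul F m n v x :
  pow_cup_nat (pow_cup_nat F m) n v x <-> pow_cup_nat F (m * n) v x.
Proof.
  revert v x; induction n as [|n IHn]; intros v x.
  - rewrite Nat.mul_0_r; simpl; tauto.
  - rewrite Nat.mul_succ_r, pow_cup_nat_add; simpl; unfold img_cup.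
    split; intros [a [Ha Hax]]; exists a; split; try apply IHn; assumption.
Qed.

Lemma pow_cup_of_nat F n v x : pow_cup F (Z.of_nat n) v x <-> pow_cup_nat F n v x.
Proof.
  unfold pow_cup.
  rewrite (proj2 (Z.leb_le 0 _) (Nat2Z.is_nonneg n)), Nat2Z.id; tauto.
Qed.

Lemma pow_minus_nat_inv F n v x :
  pow_minus_nat F n v x <-> pow_cup_nat (mf_inv F) n v x.
Proof.
  revert v x; induction n as [|n IHn]; intros v x; simpl; [tauto|].
  unfold img_cup, img_minus, mf_inv.
  split; intros [a [H1 H2]]; exists a; split; try apply IHn; assumption.
Qed.

Lemma pow_minus_inv F z v x : pow_minus F z v x <-> pow_cup (mf_inv F) z v x.
Proof.
  unfold pow_minus, pow_cup; destruct (0 <=? z)%Z; apply pow_minus_nat_inv.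
Qed.

Lemma inf_minus_inv F z v x : inf_minus F z v x <-> inf_cup (mf_inv F) z v x.
Proof.
  unfold inf_minus, inf_cup.
  split; intros [n Hn]; exists n; rewrite !pow_minus_inv in *; exact Hn.
Qed.

(* [(-z) n = z (-n)]: the two halves of the union swap. *)
Lemma inf_cup_opp F z v x : inf_cup F (- z) v x <-> inf_cup F z v x.
Proof.
  unfold inf_cup.
  setoid_rewrite Z.mul_opp_opp; setoid_rewrite Z.mul_opp_comm.
  split; intros [n Hn]; exists n; tauto.
Qed.

Lemma inf_cup_pos_ext F G m v x :
  mf_eq F G -> inf_cup_pos F m v x <-> inf_cup_pos G m v x.
Proof.
  intros HFG; unfold inf_cup_pos.
  split; intros [n Hn]; exists n; apply (pow_cup_nat_ext F G _ _ _ HFG); exact Hn.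
Qed.

Lemma is_walk_0 F u w l : is_walk F u w 0 l <-> l = [u] /\ w = u.
Proof.
  unfold is_walk; split.
  - intros [Hl [H0 [Hw _]]].
    destruct l as [|a [|b l]]; try discriminate; simpl in *; subst; auto.
  - intros [-> ->]; repeat split; intros; lia.
Qed.

Lemma is_walk_S F u w n l :
  is_walk F u w (S n) l <->
  exists a l', l = u :: l' /\ is_walk F a w n l' /\ F a u.
Proof.
  unfold is_walk; split.
  - intros [Hl [H0 [Hw Hstep]]].
    destruct l as [|u' [|a l]]; try discriminate.
    cbn in H0; subst u'; cbn [length] in Hl; injection Hl as Hl.
    change (nth n (a :: l) u = w) in Hw.
    exists a, (a :: l); split; [reflexivity|]; split; [|apply (Hstep 0); lia].
    repeat split; [cbn; congruence | |].
    + rewrite (nth_indep (a :: l) a u) by (cbn; lia); exact Hw.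
    + intros i Hi.
      rewrite !(nth_indep (a :: l) a u) by (cbn; lia).
      apply (Hstep (S i)); lia.
  - intros [a [l' [-> [[Hl [H0 [Hw Hstep]]] Hau]]]].
    repeat split; [cbn; congruence | |].
    + cbn; rewrite (nth_indep l' u a) by lia; exact Hw.
    + intros [|i] Hi.
      * destruct l' as [|b l']; [discriminate|]; cbn in *; subst; exact Hau.
      * cbn; rewrite !(nth_indep l' u a) by lia. apply Hstep; lia.
Qed.

Lemma pow_cup_nat_walk F n w u :
  pow_cup_nat F n w u <-> exists l, is_walk F u w n l.
Proof.
  revert u; induction n as [|n IHn]; intros u.
  - simpl; split.
    + intros ->; exists [w]; apply is_walk_0; auto.
    + intros [l Hl]; apply is_walk_0 in Hl; symmetry; apply Hl.
  - simpl; unfold img_cup; split.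
    + intros [a [Ha Hau]]; apply IHn in Ha as [l Hl].
      exists (u :: l); apply is_walk_S; eauto.
    + intros [l Hl]; apply is_walk_S in Hl as [a [l' [_ [Hl' Hau]]]].
      exists a; split; [apply IHn; eauto | exact Hau].
Qed.

Lemma inf_cup_pos_walk F m w u :
  inf_cup_pos F m w u <-> exists l, is_walk_mod F u w m l.
Proof.
  unfold inf_cup_pos, is_walk_mod; split.
  - intros [n Hn]; apply pow_cup_nat_walk in Hn as [l Hl]; eauto.
  - intros [l [n Hl]]; exists n; apply pow_cup_nat_walk; eauto.
Qed.

Lemma inf_cup_pos_everywhereloop F m : everywhereloop (inf_cup_pos F m).
Proof. intros v; exists 0; rewrite Nat.mul_0_r; reflexivity. Qed.

Lemma inf_cup_pos_transitive F m : mf_transitive (inf_cup_pos F m).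
Proof.
  intros u v w [n1 H1] [n2 H2]; exists (n2 + n1).
  rewrite Nat.mul_add_distr_l; apply pow_cup_nat_add; eauto.
Qed.

Lemma pow_cup_nat_sub_inf_cup_pos F m : mf_sub (pow_cup_nat F m) (inf_cup_pos F m).
Proof. intros v x H; exists 1; rewrite Nat.mul_1_r; exact H. Qed.

Lemma inf_cup_pos_divide F k m :
  Nat.divide k m -> mf_sub (inf_cup_pos F m) (inf_cup_pos F k).
Proof.
  intros [c ->] v x [n Hn]; exists (c * n).
  rewrite Nat.mul_assoc, (Nat.mul_comm k c); exact Hn.
Qed.

Lemma inf_cup_pos_pow F m k v x :
  inf_cup_pos (pow_cup_nat F m) k v x <-> inf_cup_pos F (k * m) v x.
Proof.
  unfold inf_cup_pos.
  split; intros [n Hn]; exists n.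
  - rewrite (Nat.mul_comm k m), <- Nat.mul_assoc; apply pow_cup_nat_mul, Hn.
  - apply pow_cup_nat_mul; rewrite Nat.mul_assoc, (Nat.mul_comm m k); exact Hn.
Qed.

Section Undirected.

Variable F : mfun V.
Hypothesis HF : undirected F.

Lemma pow_cup_nat_undirected n : undirected (pow_cup_nat F n).
Proof.
  assert (Hsym : forall v x, pow_cup_nat F n v x -> pow_cup_nat F n x v).
  { induction n as [|n IHn]; intros v x; simpl; [auto|].
    intros [a [Ha Hax]].
    apply (pow_cup_nat_add F 1 n).
    exists a; split; [apply pow_cup_nat_1, HF, Hax | apply IHn, Ha]. }
  intros v x; unfold mf_inv; split; apply Hsym.
Qed.

Lemma inf_cup_pos_undirected m : undirected (inf_cup_pos F m).
Proof.
  intros v x; unfold mf_inv, inf_cup_pos.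
  split; intros [n Hn]; exists n; apply pow_cup_nat_undirected; exact Hn.
Qed.

Lemma pow_cup_abs z v x : pow_cup F z v x <-> pow_cup_nat F (Z.abs_nat z) v x.
Proof.
  unfold pow_cup; destruct z as [|p|p]; simpl; try tauto.
  symmetry; apply pow_cup_nat_ext, HF.
Qed.

Lemma inf_cup_abs z v x : inf_cup F z v x <-> inf_cup_pos F (Z.abs_nat z) v x.
Proof.
  assert (Habs : forall n, Z.abs_nat (z * Z.of_nat n) = Z.abs_nat z * n
                        /\ Z.abs_nat (z * - Z.of_nat n) = Z.abs_nat z * n).
  { intros n; split; apply Nat2Z.inj; rewrite Nat2Z.inj_mul, !Nat2Z.inj_abs_nat; lia. }
  unfold inf_cup, inf_cup_pos.
  split.
  - intros [n [Hn|Hn]]; exists n; apply pow_cup_abs in Hn;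
      destruct (Habs n) as [H1 H2]; rewrite ?H1, ?H2 in Hn; exact Hn.
  - intros [n Hn]; exists n; left; apply pow_cup_abs.
    destruct (Habs n) as [-> _]; exact Hn.
Qed.

Lemma inf_cup_of_nat m v x : inf_cup F (Z.of_nat m) v x <-> inf_cup_pos F m v x.
Proof. rewrite inf_cup_abs, Zabs2Nat.id; reflexivity. Qed.

End Undirected.

Lemma inf_minus_undirected F z v x :
  undirected F -> inf_minus F z v x <-> inf_cup F z v x.
Proof.
  intros HF.
  assert (HFinv : undirected (mf_inv F)) by (intros a b; exact (HF b a)).
  rewrite inf_minus_inv, (inf_cup_abs F HF), (inf_cup_abs _ HFinv).
  symmetry; apply inf_cup_pos_ext, HF.
Qed.

End Multifunctions.

Theorem lemma4p11 (V : Type) (HV : inhabited V) (F : mfun V)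
  (HF : undirected F) (m k : nat) :
  (* (i) *)
  ((forall w u, inf_cup F (Z.of_nat m) w u <-> exists l, is_walk_mod F u w m l) /\
   undirected (inf_cup F (Z.of_nat m)) /\
   everywhereloop (inf_cup F (Z.of_nat m)) /\
   mf_transitive (inf_cup F (Z.of_nat m))) /\
  (* (ii) *)
  (mf_eq (inf_cup F (- Z.of_nat m)) (inf_cup F (Z.of_nat m)) /\
   mf_eq (inf_minus F (Z.of_nat m)) (inf_cup F (Z.of_nat m))) /\
  (* (iii) *)
  mf_eq (inf_cup (pow_cup F (Z.of_nat m)) (Z.of_nat k))
        (inf_cup F (Z.of_nat (k * m))) /\
  (* (iv) *)
  (Nat.divide k m ->
     mf_sub (inf_cup F (Z.of_nat m)) (inf_cup F (Z.of_nat k)) /\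
     mf_sub (pow_cup F (Z.of_nat m)) (inf_cup F (Z.of_nat k))) /\
  (* (v) *)
  (mf_sub (pow_cup F (Z.of_nat m)) (inf_cup F (Z.of_nat m)) /\
   mf_sub (inf_cup F (Z.of_nat m)) (inf_cup F 1%Z)).
Proof.
  assert (HFm : undirected (pow_cup F (Z.of_nat m))).
  { intros v x; unfold mf_inv; rewrite !pow_cup_of_nat; apply pow_cup_nat_undirected, HF. }
  change 1%Z with (Z.of_nat 1).
  unfold undirected, everywhereloop, mf_transitive, mf_eq, mf_sub, mf_inv in *.
  setoid_rewrite inf_cup_opp; setoid_rewrite (inf_minus_undirected F _ _ _ HF).
  setoid_rewrite (inf_cup_of_nat _ HFm); setoid_rewrite (inf_cup_of_nat F HF).
  setoid_rewrite pow_cup_of_nat.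
  split; [|split; [|split; [|split]]].
  - split; [|split; [|split]].
    + intros w u; apply inf_cup_pos_walk.
    + apply (inf_cup_pos_undirected F HF).
    + apply inf_cup_pos_everywhereloop.
    + apply inf_cup_pos_transitive.
  - split; intros v x; reflexivity.
  - intros v x; rewrite (inf_cup_pos_ext _ _ k v x (pow_cup_of_nat F m)).
    apply inf_cup_pos_pow.
  - intros Hkm; split; [apply inf_cup_pos_divide, Hkm|].
    intros v x H; apply (inf_cup_pos_divide F k m Hkm), pow_cup_nat_sub_inf_cup_pos, H.
  - split; [apply pow_cup_nat_sub_inf_cup_pos | apply inf_cup_pos_divide, Nat.divide_1_l].
Qed.
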